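(* Let $l,t,s,n$ be integers with $t\geq l$, $s\geq l+1\geq 3$ and $n\geq 2\binom{3s}{2}$. Then for every integer $x$ with $1\leq x\leq l-1$, $$ex(n,\{K_{l,t},M_{s+1}\},l-1)\geq ex(n,\{K_{l,t},M_{s+1}\},x).$$
   Context: All graphs are finite and simple. $K_{l,t}$ is the complete bipartite graph with parts of sizes $l,t$; $M_{s+1}$ is the matching of $s+1$ disjoint edges; a graph is $\{K_{l,t},M_{s+1}\}$-free if it contains neither as a subgraph. For a graph $G$ with matching number at most $s$, say $X\subseteq V(G)$ is admissible if $|X|+\sum_{i=1}^m\lfloor |V(C_i)|/2\rfloor\leq s$, where $C_1,\dots,C_m$ are the components of $G-X$ (such $X$ exists by the Tutte–Berge formula); let $x(G)$ be the maximum size of an admissible set. Let $\mathscr{G}_x$ be the set of $\{K_{l,t},M_{s+1}\}$-free graphs $G$ on $n$ vertices with $x(G)=x$, and $ex(n,\{K_{l,t},M_{s+1}\},x)=\max_{G\in\mathscr{G}_x}e(G)$. *)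

From mathcomp Require Import all_boot.
Set Implicit Arguments. Unset Strict Implicit. Unset Printing Implicit Defensive.

(* A graph on the vertex set 'I_n is given by its edge set: a set of
   2-element subsets of 'I_n (see [is_simple]). *)
Definition graph (n : nat) := {set {set 'I_n}}.

Definition is_simple n (E : graph n) : bool := [forall e in E, #|e| == 2].

Definition adj n (E : graph n) (u v : 'I_n) : bool := [set u; v] \in E.

Definition nedges n (E : graph n) : nat := #|E|.

Definition contains_Klt n (E : graph n) (l t : nat) : bool :=
  [exists A : {set 'I_n}, exists B : {set 'I_n},
     [&& #|A| == l, #|B| == t, [disjoint A & B] &
         [forall a in A, forall b in B, adj E a b]]].

Definition contains_matching n (E : graph n) (k : nat) : bool :=
  [exists g : {ffun 'I_k * bool -> 'I_n},
     injectiveb g && [forall i : 'I_k, adj E (g (i, false)) (g (i, true))]].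

Definition KM_free n (E : graph n) (l t s : nat) : bool :=
  ~~ contains_Klt E l t && ~~ contains_matching E s.+1.

Definition restr n (E : graph n) (X : {set 'I_n}) : rel 'I_n :=
  fun u v => [&& adj E u v, u \notin X & v \notin X].

Definition comps n (E : graph n) (X : {set 'I_n}) : {set {set 'I_n}} :=
  [set [set y | connect (restr E X) x y] | x in ~: X].

Definition admissible n (E : graph n) (s : nat) (X : {set 'I_n}) : bool :=
  #|X| + \sum_(C in comps E X) #|C|./2 <= s.

Definition has_x n (E : graph n) (s x : nat) : bool :=
  [exists X : {set 'I_n}, admissible E s X && (#|X| == x)] &&
  [forall X : {set 'I_n}, admissible E s X ==> (#|X| <= x)].

Definition in_Gx n (l t s x : nat) (E : graph n) : bool :=
  [&& is_simple E, KM_free E l t s & has_x E s x].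

Definition ex_x (n l t s x : nat) : nat :=
  \max_(E : graph n | in_Gx l t s x E) nedges E.

From mathcomp Require Import all_boot zify.
Set Implicit Arguments. Unset Strict Implicit. Unset Printing Implicit Defensive.

(* Write a = l - 1 and m = s - a.  The extremal graph is a clique K on a vertices,
   joined to an independent set of n - a - 3m vertices, plus m disjoint triangles.
   Only the vertices of K have degree >= t, so it has no K_{l,t}; K is admissible,
   so by the easy half of the Tutte-Berge formula it has no M_{s+1}; and every
   admissible X has at most a vertices: X must contain K (otherwise K and the
   independent set lie in one huge component of G - X), and then each triangle
   either costs X two vertices or leaves a component with at least two vertices.
   Hence x = a.  Conversely, if X is admissible of size x(G) = x, every edge of G
   meets X or lies in a component C of G - X, and as the floor(|C|/2) sum to at
   most s, the components carry at most 3 s^2 edges.  For x < a and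
   n >= 2 C(3s, 2), C(n,2) - C(n-x,2) + 3 s^2 is at most the number
   C(n-3m,2) - C(n-3m-a,2) of edges of the extremal graph meeting K. *)

Definition pairs (T : finType) (B : {set T}) : {set {set T}} :=
  [set e : {set T} | e \subset B & #|e| == 2].

Lemma card_bigcup_le (I T : finType) (A : {pred I}) (F : I -> {set T}) :
  #|\bigcup_(i in A) F i| <= \sum_(i in A) #|F i|.
Proof.
apply: (big_ind2 (fun (U : {set T}) k => #|U| <= k)); first by rewrite cards0.
  by move=> U k V k' leUk leVk'; rewrite (leq_trans (leq_card_setU U V).1) ?leq_add.
by [].
Qed.

Lemma leq_sum_subpred (I : Type) (r : seq I) (P Q : pred I) (F : I -> nat) :
  (forall i, P i -> Q i) -> \sum_(i <- r | P i) F i <= \sum_(i <- r | Q i) F i.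
Proof. exact: (sub_le_big leqnn (fun x y => leq_addr y x)). Qed.

Lemma card_range n lo hi : hi <= n ->
  #|[set w : 'I_n | lo <= w < hi]| = hi - lo.
Proof.
elim: hi => [|hi IH] le_hi_n.
  by rewrite sub0n; apply/eqP; rewrite cards_eq0; apply/eqP/setP=> w; rewrite !inE; lia.
have [lt_hi_lo | le_lo_hi] := ltnP hi lo.
  rewrite (_ : hi.+1 - lo = 0); last by lia.
  by apply/eqP; rewrite cards_eq0; apply/eqP/setP=> w; rewrite !inE; lia.
have -> : [set w : 'I_n | lo <= w < hi.+1] =
          Ordinal le_hi_n |: [set w : 'I_n | lo <= w < hi].
  by apply/setP=> w; rewrite !inE -val_eqE /=; lia.
by rewrite cardsU1 IH 1?ltnW // !inE /=; lia.
Qed.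

Section SimpleGraphs.
Variable n : nat.
Implicit Types (E : graph n) (X : {set 'I_n}).

Lemma adj_sym E u v : adj E u v = adj E v u.
Proof. by rewrite /adj setUC. Qed.

Lemma restr_sym E X u v : restr E X u v = restr E X v u.
Proof. by rewrite /restr adj_sym [(u \notin X) && _]andbC. Qed.

Definition comp E X v := [set y | connect (restr E X) v y].

Lemma comp_in_comps E X v : v \notin X -> comp E X v \in comps E X.
Proof. by move=> vX; apply: imset_f; rewrite inE. Qed.

Lemma comp_eq_clique E X (S : {set 'I_n}) v :
  v \in S -> S \subset ~: X ->
  {in S &, forall u w, u != w -> adj E u w} ->
  {in S, forall u w, restr E X u w -> w \in S} ->
  comp E X v = S.
Proof.
move=> vS sSX clique closedS; apply/setP=> w; rewrite inE.
apply/idP/idP => [vw | wS].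
  have closed_mem : closed (restr E X) (mem S).
    move=> u u' uu'; apply/idP/idP => [/closedS|]; first exact.
    by move/closedS; apply; rewrite restr_sym.
  by rewrite -(closed_connect closed_mem vw).
have [-> | vw] := eqVneq v w; first exact: connect0.
apply: connect1; rewrite /restr clique //.
by rewrite -!in_setC !(subsetP sSX).
Qed.

Lemma nedges_le_comps E X : is_simple E ->
  nedges E <= 'C(n, 2) - 'C(n - #|X|, 2) + \sum_(C in comps E X) 'C(#|C|, 2).
Proof.
move=> /forall_inP simpleE.
have sub : E \subset (pairs setT :\: pairs (~: X)) :|: \bigcup_(C in comps E X) pairs C.
  apply/subsetP=> e eE; have card_e := simpleE e eE.
  have /cards2P [u [v [_ def_e]]] := card_e.
  rewrite !inE subsetT card_e andbT /=.
  case: (boolP (e \subset ~: X)) => [sub_e | _] //=.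
  have [uX vX] : u \in ~: X /\ v \in ~: X.
    by split; apply: (subsetP sub_e); rewrite def_e !inE eqxx ?orbT.
  apply/bigcupP; exists (comp E X u).
    by apply: comp_in_comps; rewrite -in_setC.
  rewrite inE card_e andbT def_e; apply/subsetP=> w; rewrite !inE.
  case/orP=> /eqP ->; first exact: connect0.
  by apply: connect1; rewrite /restr /adj -def_e eE -!in_setC uX vX.
apply: leq_trans (subset_leq_card sub) _.
apply: leq_trans (leq_card_setU _ _).1 (leq_add _ _).
  rewrite cardsDS; last by apply/subsetP=> e; rewrite !inE subsetT => /andP[_ ->].
  by rewrite /pairs !cards_draws cardsT [#|~: X|]cardsCs setCK card_ord.
apply: leq_trans (card_bigcup_le _ _) _.
by apply: leq_sum => C _; rewrite cards_draws.
Qed.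

Lemma matching_le_barrier E X k : contains_matching E k ->
  k <= #|X| + \sum_(C in comps E X) #|C|./2.
Proof.
case/existsP=> g /andP [/injectiveP g_inj /forallP g_adj].
pose hit := [set i | (g (i, false) \in X) || (g (i, true) \in X)].
have le_hit : #|hit| <= #|X|.
  pose end_in_X i := if g (i, false) \in X then g (i, false) else g (i, true).
  have inj : {in hit &, injective end_in_X}.
    by move=> i j _ _; rewrite /end_in_X; do 2!case: (_ \in X); move/g_inj => [].
  rewrite -(card_in_imset inj); apply/subset_leq_card/subsetP=> y /imsetP[i].
  by rewrite inE /end_in_X => hit_i ->; case: ifP => // gX; rewrite gX in hit_i.
have le_miss : #|~: hit| <= \sum_(C in comps E X) #|C|./2.
  rewrite -sum1_card (partition_big (fun i => comp E X (g (i, false))) (mem (comps E X))).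
    apply: leq_sum => C _; rewrite sum1dep_card.
    set B := [set i in ~: hit | _]; rewrite geq_half_double -muln2.
    rewrite -[2]card_bool -cardsT -cardsX -(card_imset _ g_inj).
    apply/subset_leq_card/subsetP=> y /imsetP[[i b] /setXP[+ _] ->].
    rewrite !inE negb_or => /andP[/andP[i0X i1X] /eqP <-].
    rewrite inE; case: b; last exact: connect0.
    by apply: connect1; rewrite /restr g_adj i0X i1X.
  move=> i; rewrite !inE negb_or => /andP[i0X _].
  exact: comp_in_comps.
by rewrite -[k]card_ord -(cardsC hit) leq_add.
Qed.

Lemma admissible_matching_free E s X : admissible E s X -> ~~ contains_matching E s.+1.
Proof.
by move=> adm; apply/negP => /(matching_le_barrier X)/leq_trans/(_ adm); rewrite ltnn.
Qed.

Definition nbhd E v := [set w | adj E v w].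

Lemma Klt_free_sparse E (K : {set 'I_n}) l t :
  #|K| < l -> (forall v, t <= #|nbhd E v| -> v \in K) -> ~~ contains_Klt E l t.
Proof.
move=> small_K dense_in_K; apply/negP.
case/existsP=> A /existsP[B /and4P[/eqP cardA /eqP cardB _ /forall_inP AB]].
suff /subset_leq_card : A \subset K by rewrite cardA leqNgt small_K.
apply/subsetP=> v vA; apply: dense_in_K; rewrite -cardB subset_leq_card //.
by apply/subsetP=> w wB; rewrite inE (forall_inP (AB v vA)).
Qed.

Definition graph_of (r : rel 'I_n) : graph n :=
  [set [set u; v] | u, v in [set w | (u != w) && r u w]].

Lemma graph_of_simple r : is_simple (graph_of r).
Proof.
by apply/forall_inP=> e /imset2P[u v _]; rewrite inE => /andP[uv _] ->; rewrite cards2 uv.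
Qed.

Lemma adj_graph_of r u v : symmetric r -> adj (graph_of r) u v = (u != v) && r u v.
Proof.
move=> r_sym; apply/imset2P/idP => [[u' v' _] | uv]; last by exists u v; rewrite ?inE.
rewrite inE => /andP[uv' ruv'] e.
have uv : u != v.
  by move/(congr1 (fun A : {set 'I_n} => #|A|)): e; rewrite !cards2 uv'; case: (u != v).
have v_in : v \in [set u'; v'] by rewrite -e set22.
have /set2P[eq_u | eq_u] : u \in [set u'; v'] by rewrite -e set21.
  case/set2P: v_in => eq_v; last by rewrite uv eq_u eq_v.
  by rewrite eq_u eq_v eqxx in uv.
case/set2P: v_in => eq_v; first by rewrite uv eq_u eq_v r_sym.
by rewrite eq_u eq_v eqxx in uv.
Qed.

Lemma sum_bin2_comps_le E X s : admissible E s X ->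
  \sum_(C in comps E X) 'C(#|C|, 2) <= 3 * s * s.
Proof.
rewrite /admissible; set S := \sum_(C in _) _ => adm.
have le_S : S <= s by apply: leq_trans adm; apply: leq_addl.
have bin2_le c : 'C(c, 2) <= 3 * c./2 * c./2.
  rewrite bin2 -[c in c * _]odd_double_half -[c in _ * c.-1]odd_double_half.
  case: (odd c) => /=; [| case: (c./2) => //=]; nia.
apply: (@leq_trans (\sum_(C in comps E X) 3 * S * #|C|./2)).
  apply: leq_sum => C compC; apply: leq_trans (bin2_le _) _.
  by rewrite leq_mul2r leq_mul2l /S (bigD1 C) //= leq_addr orbT.
by rewrite -big_distrr /= -/S leq_mul // leq_mul.
Qed.

Lemma nedges_Gx_le l t s x E : in_Gx l t s x E ->
  nedges E <= 'C(n, 2) - 'C(n - x, 2) + 3 * s * s.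
Proof.
case/and3P=> simple_E _ /andP[/existsP[X /andP[adm /eqP card_X]] _].
by rewrite -card_X (leq_trans (nedges_le_comps X simple_E)) // leq_add2l sum_bin2_comps_le.
Qed.

End SimpleGraphs.

Lemma double_bin2 p : 'C(p, 2) * 2 = p * p.-1.
Proof.
rewrite bin2 muln2 -[RHS]odd_double_half; case: p => //= p.
by rewrite oddM andNb.
Qed.

Lemma double_bin2_diff P d : d <= P ->
  ('C(P, 2) - 'C(P - d, 2)) * 2 = d * (P + P - d - 1).
Proof.
move=> le_dP; rewrite mulnBl !double_bin2.
have -> : P = (P - d) + d by rewrite subnK.
rewrite addnK; case: (P - d) => [|Q]; case: d {le_dP} => [|d] /=; nia.
Qed.

Lemma extremal_count_dominates n a m x : x < a ->
  9 * (a + m) * (a + m) <= n + 3 * (a + m) ->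
  'C(n, 2) - 'C(n - x, 2) + 3 * (a + m) * (a + m) <=
  'C(n - 3 * m, 2) - 'C(n - 3 * m - a, 2).
Proof.
case: a => // b lt_xa large_n.
have le_x : 'C(n, 2) - 'C(n - x, 2) <= 'C(n, 2) - 'C(n - b, 2).
  by rewrite leq_sub2l // leq_bin2l // leq_sub2l.
apply: leq_trans (leq_add le_x (leqnn _)) _.
by rewrite -(leq_pmul2r (_ : 0 < 2)) // mulnDl !double_bin2_diff; lia.
Qed.

Section ExtremalGraph.
Variables n a m : nat.
Implicit Types X : {set 'I_n}.

(* Vertices [0, a) form [core], vertices [a, a + 3m) are cut into consecutive
   triangles, and every other vertex is adjacent to [core] only. *)
Local Notation in_triangles w := (a <= w < a + 3 * m).
Local Notation block w := ((w - a) %/ 3).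

Definition extremal_rel : rel 'I_n := fun u v =>
  [|| (u < a) && ~~ in_triangles v, (v < a) && ~~ in_triangles u
    | [&& in_triangles u, in_triangles v & block u == block v]].

Definition extremal_graph := graph_of extremal_rel.

Definition core : {set 'I_n} := [set w : 'I_n | w < a].
Definition outer : {set 'I_n} := [set w : 'I_n | ~~ in_triangles w].
Definition triangle (j : nat) : {set 'I_n} :=
  [set w : 'I_n | a + 3 * j <= w < a + 3 * j + 3].

Hypothesis fit : a + 3 * m <= n.

Lemma adj_extremal u v : adj extremal_graph u v = (u != v) && extremal_rel u v.
Proof.
by apply: adj_graph_of => u' v'; rewrite /extremal_rel; apply/idP/idP; lia.
Qed.

Lemma card_core : #|core| = a.
Proof.
rewrite -[RHS]subn0 -(card_range 0 (leq_trans (leq_addr _ _) fit)).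
by apply: eq_card => w; rewrite !inE.
Qed.

Lemma card_outer : #|outer| = n - 3 * m.
Proof.
have -> : outer = ~: [set w : 'I_n | a <= w < a + 3 * m].
  by apply/setP=> w; rewrite !inE.
by rewrite cardsCs setCK card_ord card_range // addKn.
Qed.

Lemma card_triangle j : j < m -> #|triangle j| = 3.
Proof. by move=> lt_jm; rewrite card_range; lia. Qed.

Lemma triangle_comp X j v : j < m -> v \in triangle j :\: X ->
  comp extremal_graph X v = triangle j :\: X.
Proof.
move=> lt_jm v_in; apply: comp_eq_clique => //.
- by apply/subsetP=> w; rewrite !inE => /andP[].
- by move=> u w; rewrite !inE adj_extremal /extremal_rel => /andP[_ ?] /andP[_ ?] ->; lia.
- move=> u + w; rewrite /restr adj_extremal !inE /extremal_rel => /andP[_ uj].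
  by case/and3P=> /andP[_ uw] _ ->; move: uw; lia.
Qed.

Lemma sum_comps_core : \sum_(C in comps extremal_graph core) #|C|./2 <= m.
Proof.
pose Tset := [set triangle j :\: core | j : 'I_m].
apply: (@leq_trans (\sum_(C in comps extremal_graph core) (C \in Tset))).
  apply: leq_sum => C /imsetP[v]; rewrite inE => v_out ->.
  have [tri_v | out_v] := boolP (in_triangles v).
    have lt_block : block v < m by lia.
    have v_in : v \in triangle (block v) :\: core by rewrite !inE; lia.
    rewrite -/(comp _ _ v) (triangle_comp lt_block v_in).
    have -> : triangle (block v) :\: core \in Tset by apply/imsetP; exists (Ordinal lt_block).
    have := subset_leq_card (subsetDl (triangle (block v)) core).
    by rewrite card_triangle //; lia.
  rewrite -/(comp _ _ v) (@comp_eq_clique _ _ _ [set v]) ?cards1 //; first by rewrite set11.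
  - by rewrite sub1set inE.
  - by move=> u w /set1P-> /set1P->; rewrite eqxx.
  - move=> u /set1P-> w /and3P[]; rewrite adj_extremal !inE /extremal_rel.
    by move: v_out out_v; rewrite !inE; lia.
rewrite -big_mkcondr sum1_card -[m]card_ord.
apply: leq_trans (leq_imset_card (fun j : 'I_m => triangle j :\: core) _).
by apply/subset_leq_card/subsetP=> C /andP[].
Qed.

Lemma admissible_core : admissible extremal_graph (a + m) core.
Proof. by rewrite /admissible card_core leq_add2l sum_comps_core. Qed.

Lemma card_nbhd_extremal (v : 'I_n) : ~~ (v < a) ->
  #|nbhd extremal_graph v| <= maxn a 2.
Proof.
move=> v_out; have [tri_v | out_v] := boolP (in_triangles v).
  have lt_block : block v < m by lia.
  have v_in : v \in triangle (block v) by rewrite inE; lia.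
  have card_T : #|triangle (block v) :\ v| = 2.
    by have := cardsD1 v (triangle (block v)); rewrite v_in card_triangle // add1n => -[].
  apply: leq_trans (leq_maxr a 2); rewrite -card_T.
  apply/subset_leq_card/subsetP=> w; rewrite !inE adj_extremal eq_sym => /andP[-> /=].
  by move: v_out tri_v; rewrite /extremal_rel; lia.
apply: leq_trans (leq_maxl a 2); rewrite -card_core.
apply/subset_leq_card/subsetP=> w; rewrite !inE adj_extremal => /andP[_].
by move: v_out out_v; rewrite /extremal_rel; lia.
Qed.

Lemma extremal_Klt_free t : 2 < t -> a < t -> ~~ contains_Klt extremal_graph a.+1 t.
Proof.
move=> t_gt2 t_gta; apply: (Klt_free_sparse (K := core)); first by rewrite card_core.
move=> v; apply: contraTT; rewrite inE => v_out.
by rewrite -ltnNge (leq_ltn_trans (card_nbhd_extremal v_out)) // gtn_max t_gt2 t_gta.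
Qed.

Definition light X := [set j : 'I_m | #|triangle j :&: X| <= 1].

Lemma light_le_sum_comps X : #|light X| <= \sum_(C in comps extremal_graph X) #|C|./2.
Proof.
pose rest (j : 'I_m) := triangle j :\: X.
have big_rest j : j \in light X -> 1 < #|rest j|.
  by rewrite inE cardsD card_triangle //; lia.
have rest_elem j : j \in light X -> exists v, v \in rest j.
  by move/big_rest/ltnW/card_gt0P.
have rest_comp j : j \in light X -> rest j \in comps extremal_graph X.
  move=> /rest_elem[v v_in]; rewrite /rest -(triangle_comp (ltn_ord j) v_in).
  by apply: comp_in_comps; move: v_in; rewrite inE => /andP[].
have rest_inj : {in light X &, injective rest}.
  move=> j k /rest_elem[v v_in] _ eq_jk; move: (v_in); rewrite eq_jk.
  rewrite !inE in v_in * => /andP[_ vk]; case/andP: v_in => _ vj.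
  by apply: val_inj => /=; move: vj vk; lia.
rewrite -(card_in_imset rest_inj).
apply: (@leq_trans (\sum_(C in rest @: light X) #|C|./2)).
  rewrite -sum1_card; apply: leq_sum => _ /imsetP[j j_light ->].
  by have := big_rest j j_light; lia.
by apply: leq_sum_subpred => _ /imsetP[j j_light ->]; apply: rest_comp.
Qed.

Lemma card_ge_heavy X : core \subset X -> a + 2 * #|~: light X| <= #|X|.
Proof.
move=> core_X; pose F (j : 'I_m) := triangle j :&: X.
have disjF i j : i != j -> [disjoint F i & F j].
  rewrite -setI_eq0 -val_eqE /= => ne; apply/eqP/setP=> w; rewrite !inE.
  by apply/negP; move: ne; lia.
have card_cup : #|\bigcup_j F j| = \sum_j #|F j|.
  rewrite -sum1_card (partition_disjoint_bigcup _ _ disjF).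
  by apply: eq_bigr => j _; rewrite sum1_card.
have cup_sub : \bigcup_j F j \subset X :\: core.
  by apply/bigcupsP=> j _; apply/subsetP=> w; rewrite !inE => /andP[w_T ->]; move: w_T; lia.
have heavy_sum : 2 * #|~: light X| <= \sum_j #|F j|.
  apply: (@leq_trans (\sum_(j in ~: light X) #|F j|)).
    by rewrite mulnC -sum_nat_const; apply: leq_sum => j; rewrite !inE /F; lia.
  exact: leq_sum_subpred.
rewrite -(cardsID core X) (setIidPr core_X) card_core leq_add2l.
by rewrite (leq_trans heavy_sum) // -card_cup subset_leq_card.
Qed.

Lemma admissible_core_sub X : 3 * a + 6 * m < n ->
  admissible extremal_graph (a + m) X -> core \subset X.
Proof.
rewrite /admissible => large adm; apply/subsetP=> k k_core; apply/contraT => k_X.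
exfalso.
set C := comp extremal_graph X k.
have sub : outer :\: X \subset C.
  apply/subsetP=> w; rewrite !inE => /andP[w_X w_out].
  have [<- | kw] := eqVneq k w; first exact: connect0.
  apply: connect1; rewrite /restr adj_extremal kw k_X w_X /extremal_rel.
  by move: k_core w_out; rewrite !inE => -> ->.
have half_le : #|C|./2 <= \sum_(C' in comps extremal_graph X) #|C'|./2.
  by rewrite (bigD1 C (comp_in_comps _ k_X)) leq_addr.
have big_C : n - 3 * m - #|X| <= #|C|.
  apply: leq_trans (subset_leq_card sub).
  by rewrite cardsD card_outer leq_sub2l // subset_leq_card // subsetIr.
by move: adm half_le big_C k_core; rewrite inE; lia.
Qed.

Lemma admissible_card_le X : 3 * a + 6 * m < n ->
  admissible extremal_graph (a + m) X -> #|X| <= a.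
Proof.
move=> large adm; have core_X := admissible_core_sub large adm.
have := card_ge_heavy core_X; have := light_le_sum_comps X.
have := cardsC (light X); rewrite card_ord.
by move: adm; rewrite /admissible; lia.
Qed.

Lemma extremal_in_Gx t : 1 < a -> a < t -> 3 * a + 6 * m < n ->
  in_Gx a.+1 t (a + m) a extremal_graph.
Proof.
move=> a_gt1 t_gta large.
rewrite /in_Gx graph_of_simple /KM_free extremal_Klt_free ?(leq_ltn_trans a_gt1) //.
rewrite (admissible_matching_free admissible_core) /=; apply/andP; split.
  by apply/existsP; exists core; rewrite admissible_core card_core eqxx.
by apply/forallP=> X; apply/implyP; apply: admissible_card_le.
Qed.

Lemma nedges_extremal_ge :
  'C(n - 3 * m, 2) - 'C(n - 3 * m - a, 2) <= nedges extremal_graph.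
Proof.
have core_outer : core \subset outer by apply/subsetP=> w; rewrite !inE; lia.
have card_rest : #|outer :\: core| = n - 3 * m - a.
  by rewrite cardsD (setIidPr core_outer) card_outer card_core.
have sub : pairs outer :\: pairs (outer :\: core) \subset extremal_graph.
  apply/subsetP=> e; rewrite !inE => /andP[+ /andP[e_out /cards2P[u [v [uv def_e]]]]].
  rewrite def_e cards2 uv andbT => /subsetPn[w /set2P w_uv].
  have u_out : u \in outer by apply: (subsetP e_out); rewrite def_e set21.
  have v_out : v \in outer by apply: (subsetP e_out); rewrite def_e set22.
  rewrite -/(adj _ u v) adj_extremal uv /extremal_rel; rewrite !inE in u_out v_out *.
  by case: w_uv => ->; rewrite ?u_out ?v_out /=; lia.
apply: leq_trans (subset_leq_card sub).
rewrite cardsDS; last first.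
  apply/subsetP=> e; rewrite !inE => /andP[sub_e ->].
  by rewrite (subset_trans sub_e) ?subsetDl.
by rewrite /pairs !cards_draws card_outer card_rest.
Qed.

End ExtremalGraph.

Theorem lemma3p1 (l t s n : nat) :
  l <= t -> 3 <= l.+1 -> l.+1 <= s -> 2 * 'C(3 * s, 2) <= n ->
  forall x : nat, 1 <= x -> x <= l - 1 ->
  ex_x n l t s x <= ex_x n l t s (l - 1).
Proof.
move=> le_lt _ lt_ls large_n x x_gt0 le_x.
have [a [m [def_l def_s]]] : exists a m, l = a.+1 /\ s = a + m.
  by exists l.-1, (s - l.-1); lia.
subst l s; rewrite subn1 /= in le_x *.
have [-> // | ne_x] := eqVneq x a.
have lt_xa : x < a by rewrite ltn_neqAle ne_x.
have {}large_n : 9 * (a + m) * (a + m) <= n + 3 * (a + m).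
  by move: large_n; rewrite mulnC double_bin2; nia.
have fit : a + 3 * m <= n by nia.
have extremal_G : in_Gx a.+1 t (a + m) a (extremal_graph n a m).
  by apply: extremal_in_Gx => //; nia.
apply/bigmax_leqP=> E G_E; apply: leq_trans (leq_bigmax_cond _ extremal_G).
apply: leq_trans (nedges_Gx_le G_E) (leq_trans _ (nedges_extremal_ge fit)).
exact: extremal_count_dominates.
Qed.
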